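(* Consider an instance of the unique games problem: a graph $G=(V,E)$ with $|V|=n$ vertices, positive edge weights $w_{ij}>0$ for $(i,j)\in E$, a number of labels $k\ge 2$, and for each edge $(i,j)\in E$ a permutation $\sigma_{ij}$ of $\{1,\dots,k\}$. A labeling assigns to each vertex $i\in V$ a label $r_i\in\{1,\dots,k\}$; an edge $(i,j)$ is matched if $r_j=\sigma_{ij}(r_i)$, and the value of the labeling is the sum of $w_{ij}$ over matched edges. Let $z^*$ be the maximum value over all labelings. Let (P1) be the problem $$\text{maximize } E[z]=\frac14\sum_{(i,j)\in E}\sum_{r=1}^k w_{ij}\big(1+y_{ir}+y_{j\sigma_{ij}(r)}+y_{ir}y_{j\sigma_{ij}(r)}\big)$$ subject to $\sum_{r=1}^k y_{ir}=2-k$ for all $i\in V$, and $-1\le y_{ir}\le 1$ for all $r=1,\dots,k$, $i\in V$. Then (P1) is a continuous extension of the unique games problem: its objective is defined for all feasible $y$, and for every labeling $(r_i)_{i\in V}$ the point with $y_{ir_i}=1$ and $y_{ir}=-1$ for $r\ne r_i$ is feasible with objective value equal to the value of the labeling. Moreover, (1) an optimal solution of (P1) is attained with $y_{ir}\in\{-1,1\}$ for all $i,r$, and (2) the optimal value of (P1) equals $z^*$.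
   Context: The variables $y_{ir}$ correspond to probabilities $p_{ir}=\frac12(1+y_{ir})$ with which a randomized algorithm independently assigns label $r$ to vertex $i$; $E[z]$ is the expected total weight of matched edges under this randomized assignment. *)

From HB Require Import structures.
From mathcomp Require Import all_boot all_order all_algebra all_fingroup.
Set Implicit Arguments. Unset Strict Implicit. Unset Printing Implicit Defensive.
Import Order.TTheory GRing.Theory Num.Theory.
Local Open Scope ring_scope.

Section UG.
Variables (R : realFieldType) (n k : nat).
Variables (E : {set 'I_n * 'I_n}) (w : 'I_n -> 'I_n -> R)
          (sigma : 'I_n -> 'I_n -> {perm 'I_k}).

Definition ug_value (r : 'I_n -> 'I_k) : R :=
  \sum_(e in E | r e.2 == sigma e.1 e.2 (r e.1)) w e.1 e.2.

Definition ug_opt_labeling (r : 'I_n -> 'I_k) : Prop :=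
  forall r' : 'I_n -> 'I_k, ug_value r' <= ug_value r.

Definition P1_feasible (y : 'I_n -> 'I_k -> R) : Prop :=
  (forall i, \sum_(s < k) y i s = 2 - k%:R) /\
  (forall i s, -1 <= y i s <= 1).

Definition P1_obj (y : 'I_n -> 'I_k -> R) : R :=
  4^-1 * \sum_(e in E) \sum_(s < k)
     w e.1 e.2 * (1 + y e.1 s + y e.2 (sigma e.1 e.2 s)
                    + y e.1 s * y e.2 (sigma e.1 e.2 s)).

Definition P1_optimal (y : 'I_n -> 'I_k -> R) : Prop :=
  P1_feasible y /\ forall y', P1_feasible y' -> P1_obj y' <= P1_obj y.

Definition label_point (r : 'I_n -> 'I_k) : 'I_n -> 'I_k -> R :=
  fun i s => if s == r i then 1 else -1.
End UG.

From HB Require Import structures.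
From mathcomp Require Import all_boot all_order all_algebra all_fingroup.
From mathcomp Require Import ring lra.
Import Order.TTheory GRing.Theory Num.Theory.
Local Open Scope ring_scope.

(* The substitution p_ir = (1 + y_ir) / 2 turns a feasible point of (P1) into a
   probability distribution p_i on the labels of each vertex, and turns the
   objective into the expected value of the labeling drawn independently from
   the p_i: for a non-loop edge (i,j), sum_r p_ir p_j(sigma_ij r) is the
   probability that the edge is matched.  An expectation never exceeds the
   maximum z*, while the point of an optimal labeling is feasible and attains
   z*; so it is an optimal solution with entries in {-1,1}. *)

Set Implicit Arguments. Unset Strict Implicit.

Lemma sum_mul_indicator (R : pzSemiRingType) (T : finType) (a : T) (F : T -> R) :
  \sum_t F t * (t == a)%:R = F a.
Proof.
rewrite (bigD1 a) //= eqxx mulr1 big1 ?addr0 // => t /negbTE ->.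
exact: mulr0.
Qed.

Section ProductDistribution.
Variables (R : numDomainType) (I T : finType) (p : I -> T -> R).
Hypothesis p_sum1 : forall i, \sum_t p i t = 1.

Definition prod_weight (r : {ffun I -> T}) : R := \prod_i p i (r i).

Lemma sum_prod_weight : \sum_r prod_weight r = 1.
Proof.
rewrite /prod_weight -bigA_distr_bigA /=.
by rewrite big1 // => i _; rewrite p_sum1.
Qed.

Lemma expectation_le_max (F : {ffun I -> T} -> R) (M : R) :
  (forall i t, 0 <= p i t) -> (forall r, F r <= M) ->
  \sum_r prod_weight r * F r <= M.
Proof.
move=> p_ge0 FM; rewrite -[leRHS]mul1r -sum_prod_weight mulr_suml.
apply: ler_sum => r _; apply: ler_wpM2l; last exact: FM.
by apply: prodr_ge0 => i _.
Qed.

Lemma pair_marginal (i j : I) (tau : T -> T) : i != j ->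
  \sum_s p i s * p j (tau s) =
  \sum_r prod_weight r * (r j == tau (r i))%:R.
Proof.
move=> neq_ij; have neq_ji : (j == i) = false by rewrite eq_sym (negbTE neq_ij).
pose G s l t := p l t * (if l == i then (t == s)%:R else 1)
                      * (if l == j then (t == tau s)%:R else 1).
(* Every factor with l outside {i, j} is a full sum of p l, hence 1. *)
have factor_G s : p i s * p j (tau s) = \prod_l \sum_t G s l t.
  rewrite (bigD1 i) // (bigD1 j) 1?eq_sym //= [\prod_(_ | _) _]big1.
  - rewrite mulr1 /G !eqxx (negbTE neq_ij) neq_ji /=.
    under eq_bigr do rewrite mulr1; under [X in _ = _ * X]eq_bigr do rewrite mulr1.
    by rewrite !sum_mul_indicator.
  - move=> l /andP[nli nlj]; rewrite /G (negbTE nli) (negbTE nlj).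
    by under eq_bigr do rewrite !mulr1; exact: p_sum1.
under eq_bigr do rewrite factor_G bigA_distr_bigA.
rewrite exchange_big /=; apply: eq_bigr => r _.
rewrite -(sum_mul_indicator (r i) (fun s => prod_weight r * (r j == tau s)%:R)).
apply: eq_bigr => s _; rewrite /G !big_split /= -!big_mkcond !big_pred1_eq.
by rewrite mulrAC [s == _]eq_sym.
Qed.

End ProductDistribution.

Section UniqueGames.
Variables (R : realFieldType) (n k : nat).
Variables (E : {set 'I_n * 'I_n}) (w : 'I_n -> 'I_n -> R)
          (sigma : 'I_n -> 'I_n -> {perm 'I_k}).

Definition label_prob (y : 'I_n -> 'I_k -> R) i s : R := (1 + y i s) / 2.

Lemma P1_obj_label_prob y : P1_obj E w sigma y =
  \sum_(e in E) w e.1 e.2 *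
    \sum_s label_prob y e.1 s * label_prob y e.2 (sigma e.1 e.2 s).
Proof.
rewrite /P1_obj big_distrr /=; apply: eq_bigr => e _.
rewrite !big_distrr /=; apply: eq_bigr => s _.
by rewrite /label_prob; field.
Qed.

Lemma label_prob_ge0 y : P1_feasible y -> forall i s, 0 <= label_prob y i s.
Proof.
by case=> _ y_bnd i s; have /andP[? ?] := y_bnd i s; apply: divr_ge0; lra.
Qed.

Lemma sum_label_prob y : P1_feasible y -> forall i, \sum_s label_prob y i s = 1.
Proof.
case=> y_sum _ i; rewrite /label_prob -big_distrl big_split /=.
by rewrite sumr_const card_ord y_sum addrCA subrr addr0 divff // pnatr_eq0.
Qed.

Lemma ug_valueE (r : 'I_n -> 'I_k) : ug_value E w sigma r =
  \sum_(e in E) w e.1 e.2 * (r e.2 == sigma e.1 e.2 (r e.1))%:R.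
Proof.
rewrite /ug_value big_mkcondr; apply: eq_bigr => e _.
by case: eqP; rewrite ?mulr1 ?mulr0.
Qed.

Lemma P1_obj_le_ug_bound y (M : R) :
  (forall e, e \in E -> e.1 != e.2) ->
  (forall r, ug_value E w sigma r <= M) ->
  P1_feasible y -> P1_obj E w sigma y <= M.
Proof.
move=> no_loop ugM y_feas.
have p_sum1 := sum_label_prob y_feas.
suff -> : P1_obj E w sigma y =
    \sum_r prod_weight (label_prob y) r * ug_value E w sigma r.
  exact: expectation_le_max (label_prob_ge0 y_feas) _.
rewrite P1_obj_label_prob.
under eq_bigr => e eE do rewrite pair_marginal ?no_loop // big_distrr.
rewrite exchange_big /=; apply: eq_bigr => r _.
by rewrite ug_valueE big_distrr; apply: eq_bigr => e _; rewrite mulrCA.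
Qed.

Lemma label_point_feasible (r : 'I_n -> 'I_k) : P1_feasible (label_point R r).
Proof.
split=> [i|i s]; rewrite /label_point; last by case: eqP => _; apply/andP; split; lra.
rewrite (eq_bigr (fun s => 2 * (s == r i)%:R - 1)); last first.
  by move=> s _; case: eqP => _ /=; rewrite ?mulr1 ?mulr0 ?sub0r //; lra.
by rewrite sumrB sum_mul_indicator sumr_const card_ord.
Qed.

Lemma P1_obj_label_point (r : 'I_n -> 'I_k) :
  P1_obj E w sigma (label_point R r) = ug_value E w sigma r.
Proof.
rewrite P1_obj_label_prob ug_valueE; apply: eq_bigr => e _; congr (_ * _).
have prob_indicator l s : label_prob (label_point R r) l s = (s == r l)%:R.
  by rewrite /label_point /label_prob; case: eqP => _ /=; field.
under eq_bigr do rewrite !prob_indicator mulrC.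
by rewrite sum_mul_indicator eq_sym.
Qed.

Lemma exists_ug_opt_labeling : (0 < k)%N -> exists r, ug_opt_labeling E w sigma r.
Proof.
move=> k_gt0.
have [r _ r_max] := @arg_maxP _ R _ [ffun _ => Ordinal k_gt0] xpredT
  (fun r : {ffun 'I_n -> 'I_k} => ug_value E w sigma r) isT.
exists r => r'.
suff -> : ug_value E w sigma r' = ug_value E w sigma [ffun l => r' l] by exact: r_max.
by apply: eq_bigl => e; rewrite !ffunE.
Qed.

Lemma label_point_optimal (r : 'I_n -> 'I_k) :
  (forall e, e \in E -> e.1 != e.2) ->
  ug_opt_labeling E w sigma r -> P1_optimal E w sigma (label_point R r).
Proof.
move=> no_loop r_opt; split; first exact: label_point_feasible.
by move=> y y_feas; rewrite P1_obj_label_point; exact: P1_obj_le_ug_bound.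
Qed.

End UniqueGames.

Theorem theorem1 (R : realFieldType) (n k : nat)
    (E : {set 'I_n * 'I_n}) (w : 'I_n -> 'I_n -> R)
    (sigma : 'I_n -> 'I_n -> {perm 'I_k}) :
  (2 <= k)%N ->
  (forall e, e \in E -> 0 < w e.1 e.2) ->
  (forall e, e \in E -> e.1 != e.2) ->
  (* continuous extension *)
  (forall r : 'I_n -> 'I_k,
      P1_feasible (label_point R r) /\
      P1_obj E w sigma (label_point R r) = ug_value E w sigma r) /\
  (* (1) an optimal solution with all entries in {-1,1} *)
  (exists y, P1_optimal E w sigma y /\
             forall i s, y i s = 1 \/ y i s = -1) /\
  (* (2) optimal value of (P1) equals z* *)
  (exists y r, P1_optimal E w sigma y /\ ug_opt_labeling E w sigma r /\
               P1_obj E w sigma y = ug_value E w sigma r).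
Proof.
move=> k_ge2 _ no_loop.
have [r r_opt] := exists_ug_opt_labeling E w sigma (ltnW k_ge2).
have y_opt := label_point_optimal no_loop r_opt.
split; first by move=> r'; split; [exact: label_point_feasible | exact: P1_obj_label_point].
split; first by exists (label_point R r); split=> // i s; rewrite /label_point; case: eqP; auto.
by exists (label_point R r), r; split; [|split; last exact: P1_obj_label_point].
Qed.
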